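(* For all integers $k,n\geq1$ the following identity holds in $\mathcal{MS}(k,n)$: $$\Delta^{(n)}\circ\mu^{(k)}=\sum_{a\in A(k,n)}\langle a\rangle,$$ where $A(k,n)$ is the set of sequences $a=(a_1,\dots,a_k)$ of non-negative integers with $1+a_1+\dots+a_k=n$ and $\langle a\rangle\in\mathcal{MS}(k,n)$ is the element described in the context.
   Context: Fix a commutative ring $k$ (the base ring; not to be confused with the integer $k$ in the claim); chain complexes over it with the Koszul sign rule. A prop $\mathcal{P}$ is a strict symmetric monoidal category enriched in chain complexes generated by one object, $\mathcal{P}(n,m)$ the complex of morphisms from $n$ to $m$ copies; $\circ$ vertical composition, $\otimes$ horizontal composition, $\mathrm{id}\in\mathcal{P}(1,1)$. The prop $\mathcal{S}$: free prop on the free $\Sigma$-bimodule generated by $\varepsilon\in\mathcal{S}(1,0)_0$, $\Delta\in\mathcal{S}(1,2)_0$, $\mu\in\mathcal{S}(2,1)_1$, with derivation differential $\partial\varepsilon=0$, $\partial\Delta=0$, $\partial\mu=(\varepsilon\otimes\mathrm{id})-(\mathrm{id}\otimes\varepsilon)$, modulo the dg prop ideal generated by $\varepsilon\circ\mu$, $(\varepsilon\otimes\mathrm{id})\circ\Delta-\mathrm{id}$, $(\mathrm{id}\otimes\varepsilon)\circ\Delta-\mathrm{id}$. $\mathcal{MS}$ is the quotient of $\mathcal{S}$ by the dg prop ideal generated additionally by $\mu-\mu\cdot(12)$, $\mu\circ(\mu\otimes\mathrm{id})-\mu\circ(\mathrm{id}\otimes\mu)$, $(\Delta\otimes\mathrm{id})\circ\Delta-(\mathrm{id}\otimes\Delta)\circ\Delta$,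 $\Delta\circ\mu-(\mathrm{id}\otimes\mu)\circ(\Delta\otimes\mathrm{id})-(\mu\otimes\mathrm{id})\circ(\mathrm{id}\otimes\Delta)$ (Leibniz), and $\mu\circ\Delta$. Iterated operations: $\Delta^{(1)}=\mathrm{id}$, $\Delta^{(n+1)}=(\Delta^{(n)}\otimes\mathrm{id})\circ\Delta\in\mathcal{MS}(1,n+1)$; $\mu^{(1)}=\mathrm{id}$, $\mu^{(k+1)}=\mu\circ(\mu^{(k)}\otimes\mathrm{id})\in\mathcal{MS}(k+1,1)$. For $a=(a_1,\dots,a_k)\in A(k,n)$, the element $\langle a\rangle\in\mathcal{MS}(k,n)$ is the graph obtained as follows: the $i$-th input passes through $\Delta^{(a_i+1)}$, producing outputs $o_{i,1},\dots,o_{i,a_i+1}$; list all these outputs in the order $o_{1,1},\dots,o_{1,a_1+1},o_{2,1},\dots,o_{k,a_k+1}$ and, for each $i=1,\dots,k-1$, join the last output $o_{i,a_i+1}$ of the $i$-th block with the first output $o_{i+1,1}$ of the $(i+1)$-st block by the product $\mu$ (when a block has a single output, consecutive joins form an iterated product, well defined by associativity); the resulting $1+a_1+\dots+a_k=n$ strands, in the listed order, are the outputs $1,\dots,n$. For $k=n=2$ this gives $\langle(1,0)\rangle=(\mathrm{id}\otimes\mu)\circ(\Delta\otimes\mathrm{id})$ and $\langle(0,1)\rangle=(\mu\otimes\mathrm{id})\circ(\mathrm{id}\otimes\Delta)$. *)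

From HB Require Import structures.
From mathcomp Require Import all_boot all_order all_algebra.
Set Implicit Arguments. Unset Strict Implicit. Unset Printing Implicit Defensive.
Import Order.TTheory GRing.Theory Num.Theory.
Local Open Scope ring_scope.

Definition hcast (H : nat -> nat -> Type) (n n' m m' : nat)
  (e1 : n = n') (e2 : m = m') (f : H n m) : H n' m' :=
  ecast x (H x m') e1 (ecast y (H n y) e2 f).

Definition ksgn (R : pzRingType) (d e : int) : R :=
  if odd `|d|%N && odd `|e|%N then -1 else 1.
Definition ksgn1 (R : pzRingType) (d : int) : R :=
  if odd `|d|%N then -1 else 1.

(* A dg prop over the commutative ring R: a strict symmetric monoidal  *)
(* category enriched in chain complexes (homological grading, the      *)
(* differential has degree -1, Koszul sign rule), whose objects are    *)
(* the natural numbers n (= n copies of the generating object) with    *)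
(* tensor product of objects given by addition.                        *)
(* phom n m = P(n,m) (total module), phomog n m d = its degree-d part.    *)
Unset Implicit Arguments.
Record dgProp (R : comPzRingType) := DgProp {
  phom : nat -> nat -> lmodType R;
  phomog : forall n m, int -> pred (phom n m);
  pcompo : forall n m p, phom m p -> phom n m -> phom n p;
  ptens : forall n m n' m', phom n m -> phom n' m' -> phom (n + n') (m + m');
  pid : forall n, phom n n;
  psym : forall n m, phom (n + m) (m + n);
  pdif : forall n m, phom n m -> phom n m;
  homog0 : forall n m d, phomog n m d 0;
  homogD : forall n m d (f g : phom n m),
      phomog n m d f -> phomog n m d g -> phomog n m d (f + g);
  homogZ : forall n m d (a : R) (f : phom n m),
      phomog n m d f -> phomog n m d (a *: f);
  compDl : forall n m p (g g' : phom m p) (f : phom n m),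
      pcompo n m p (g + g') f = pcompo n m p g f + pcompo n m p g' f;
  compZl : forall n m p (a : R) (g : phom m p) (f : phom n m),
      pcompo n m p (a *: g) f = a *: pcompo n m p g f;
  compDr : forall n m p (g : phom m p) (f f' : phom n m),
      pcompo n m p g (f + f') = pcompo n m p g f + pcompo n m p g f';
  compZr : forall n m p (a : R) (g : phom m p) (f : phom n m),
      pcompo n m p g (a *: f) = a *: pcompo n m p g f;
  tensDl : forall n m n' m' (f f' : phom n m) (g : phom n' m'),
      ptens n m n' m' (f + f') g = ptens n m n' m' f g + ptens n m n' m' f' g;
  tensZl : forall n m n' m' (a : R) (f : phom n m) (g : phom n' m'),
      ptens n m n' m' (a *: f) g = a *: ptens n m n' m' f g;
  tensDr : forall n m n' m' (f : phom n m) (g g' : phom n' m'),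
      ptens n m n' m' f (g + g') = ptens n m n' m' f g + ptens n m n' m' f g';
  tensZr : forall n m n' m' (a : R) (f : phom n m) (g : phom n' m'),
      ptens n m n' m' f (a *: g) = a *: ptens n m n' m' f g;
  difD : forall n m (f g : phom n m), pdif n m (f + g) = pdif n m f + pdif n m g;
  difZ : forall n m (a : R) (f : phom n m), pdif n m (a *: f) = a *: pdif n m f;
  homog_comp : forall n m p d e (g : phom m p) (f : phom n m),
      phomog m p e g -> phomog n m d f -> phomog n p (e + d) (pcompo n m p g f);
  homog_tens : forall n m n' m' d e (f : phom n m) (g : phom n' m'),
      phomog n m d f -> phomog n' m' e g ->
      phomog (n + n') (m + m') (d + e) (ptens n m n' m' f g);
  homog_id : forall n, phomog n n 0 (pid n);
  homog_sym : forall n m, phomog (n + m) (m + n) 0 (psym n m);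
  homog_dif : forall n m d (f : phom n m),
      phomog n m d f -> phomog n m (d - 1) (pdif n m f);
  comp_idl : forall n m (f : phom n m), pcompo n m m (pid m) f = f;
  comp_idr : forall n m (f : phom n m), pcompo n n m f (pid n) = f;
  compA : forall n m p q (h : phom p q) (g : phom m p) (f : phom n m),
      pcompo n m q (pcompo m p q h g) f = pcompo n p q h (pcompo n m p g f);
  tensA : forall n1 m1 n2 m2 n3 m3 (f : phom n1 m1) (g : phom n2 m2)
      (h : phom n3 m3),
      ptens (n1 + n2) (m1 + m2) n3 m3 (ptens n1 m1 n2 m2 f g) h =
      @hcast (fun x y => phom x y : Type) _ _ _ _ (addnA n1 n2 n3) (addnA m1 m2 m3)
        (ptens n1 m1 (n2 + n3) (m2 + m3) f (ptens n2 m2 n3 m3 g h));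
  tens_id0l : forall n m (f : phom n m), ptens 0 0 n m (pid 0) f = f;
  tens_id0r : forall n m (f : phom n m),
      ptens n m 0 0 f (pid 0) = @hcast (fun x y => phom x y : Type) _ _ _ _ (esym (addn0 n)) (esym (addn0 m)) f;
  tens_id : forall n m, ptens n n m m (pid n) (pid m) = pid (n + m);
  interchange : forall n m p n' m' p' d d'
      (g : phom m p) (g' : phom m' p') (f : phom n m) (f' : phom n' m'),
      phomog n m d f -> phomog m' p' d' g' ->
      pcompo (n + n') (m + m') (p + p') (ptens m p m' p' g g') (ptens n m n' m' f f')
      = ksgn R d' d *: ptens n p n' p' (pcompo n m p g f) (pcompo n' m' p' g' f');
  sym_nat : forall n m n' m' d e (f : phom n n') (g : phom m m'),
      phomog n n' d f -> phomog m m' e g ->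
      pcompo (n + m) (n' + m') (m' + n') (psym n' m') (ptens n n' m m' f g)
      = ksgn R d e *:
        pcompo (n + m) (m + n) (m' + n') (ptens m m' n n' g f) (psym n m);
  sym_invol : forall n m,
      pcompo (n + m) (m + n) (n + m) (psym m n) (psym n m) = pid (n + m);
  sym_hexagon : forall n m p,
      psym n (m + p) =
      pcompo (n + (m + p)) (m + n + p) (m + p + n)
        (@hcast (fun x y => phom x y : Type) _ _ _ _ (addnA m n p) (addnA m p n)
           (ptens m m (n + p) (p + n) (pid m) (psym n p)))
        (@hcast (fun x y => phom x y : Type) _ _ _ _ (esym (addnA n m p)) (erefl _)
           (ptens (n + m) (m + n) p p (psym n m) (pid p)));
  sym_0l : forall n, psym 0 n = @hcast (fun x y => phom x y : Type) _ _ _ _ (erefl n) (esym (addn0 n)) (pid n);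
  difK : forall n m (f : phom n m), pdif n m (pdif n m f) = 0;
  dif_comp : forall n m p e (g : phom m p) (f : phom n m),
      phomog m p e g ->
      pdif n p (pcompo n m p g f)
      = pcompo n m p (pdif m p g) f + ksgn1 R e *: pcompo n m p g (pdif n m f);
  dif_tens : forall n m n' m' d (f : phom n m) (g : phom n' m'),
      phomog n m d f ->
      pdif (n + n') (m + m') (ptens n m n' m' f g)
      = ptens n m n' m' (pdif n m f) g + ksgn1 R d *: ptens n m n' m' f (pdif n' m' g);
  dif_id : forall n, pdif n n (pid n) = 0;
  dif_sym : forall n m, pdif (n + m) (m + n) (psym n m) = 0
}.

Set Implicit Arguments.
Arguments phom {R} d n m : rename.
Arguments phomog {R P n m} d f : rename.
Arguments pcompo {R P n m p} g f : rename.
Arguments ptens {R P n m n' m'} f g : rename.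
Arguments pid {R} P n : rename.
Arguments psym {R} P n m : rename.
Arguments pdif {R P n m} f : rename.

Section Ops.
Variables (R : comPzRingType) (P : dgProp R).
Variables (Del : phom P 1 2) (mu : phom P 2 1).

Lemma addn1_eq (n : nat) : (n + 1 = n.+1)%N. Proof. by rewrite addn1. Qed.
Lemma J_eq1 (M a : nat) : (M + 2 + a = M.+1 + a.+1)%N.
Proof. by rewrite !addnS !addSn addn0. Qed.
Lemma J_eq2 (M a : nat) : (M + 1 + a = (M + a).+1)%N.
Proof. by rewrite addn1. Qed.

(* DeltaS n = Delta^{(n+1)} in P(1, n+1) *)
Fixpoint DeltaS (n : nat) : phom P 1 n.+1 :=
  match n return phom P 1 n.+1 with
  | 0 => pid P 1
  | n'.+1 => @hcast (fun x y => phom P x y : Type) _ _ _ _ (erefl 1%N) (addn1_eq n'.+1)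
               (pcompo (ptens (DeltaS n') (pid P 1)) Del)
  end.

(* Delta^{(n)} in P(1,n); junk value 0 for n = 0 *)
Definition DeltaI (n : nat) : phom P 1 n :=
  match n return phom P 1 n with 0 => 0 | n'.+1 => DeltaS n' end.

(* muS k = mu^{(k+1)} in P(k+1, 1) *)
Fixpoint muS (k : nat) : phom P k.+1 1 :=
  match k return phom P k.+1 1 with
  | 0 => pid P 1
  | k'.+1 => @hcast (fun x y => phom P x y : Type) _ _ _ _ (addn1_eq k'.+1) (erefl 1%N)
               (pcompo mu (ptens (muS k') (pid P 1)))
  end.

(* mu^{(k)} in P(k,1); junk value 0 for k = 0 *)
Definition muI (k : nat) : phom P k 1 :=
  match k return phom P k 1 with 0 => 0 | k'.+1 => muS k' end.

Definition Jn (M a : nat) : phom P (M.+1 + a.+1) (M + a).+1 :=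
  @hcast (fun x y => phom P x y : Type) _ _ _ _ (J_eq1 M a) (J_eq2 M a) (ptens (ptens (pid P M) mu) (pid P a)).

(* outputs of the first k+1 blocks, minus one *)
Fixpoint outs (f : nat -> nat) (k : nat) : nat :=
  match k with 0 => f 0 | k'.+1 => (outs f k' + f k'.+1)%N end.

(* brk f k = <(f 0, ..., f k)> : the Delta^{(f i + 1)} are placed in
   parallel and the joins i = 1, ..., k are applied successively in
   this order (left-to-right). *)
Fixpoint brk (f : nat -> nat) (k : nat) : phom P k.+1 (outs f k).+1 :=
  match k return phom P k.+1 (outs f k).+1 with
  | 0 => DeltaS (f 0)
  | k'.+1 => @hcast (fun x y => phom P x y : Type) _ _ _ _ (addn1_eq k'.+1) (erefl _)
       (pcompo (Jn (outs f k') (f k'.+1)) (ptens (brk f k') (DeltaS (f k'.+1))))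
  end.

Definition tcastT (k m n : nat) (f : phom P k m) : phom P k n :=
  match m =P n with ReflectT e => @hcast (fun x y => phom P x y : Type) _ _ _ _ (erefl k) e f | ReflectF _ => 0 end.

Definition bracket (k n : nat) : k.-tuple 'I_n -> phom P k n :=
  match k return k.-tuple 'I_n -> phom P k n with
  | 0 => fun _ => 0
  | k'.+1 => fun a =>
      tcastT n (brk (fun i => nth 0%N [seq nat_of_ord x | x <- a] i) k')
  end.

End Ops.

From Pilot Require Import Defs.
From HB Require Import structures.
From mathcomp Require Import all_boot all_order all_algebra.
From Stdlib Require Import Eqdep_dec.
Import GRing.Theory.
Set Implicit Arguments. Unset Strict Implicit. Unset Printing Implicit Defensive.
Local Open Scope ring_scope.

(** The Leibniz rule gives, by induction on [N],
    [Delta^(N+1) o mu = sum_(i + j = N) (id^i (x) mu (x) id^j) o (Delta^(i+1) (x) Delta^(j+1))]: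
    the first Leibniz summand contributes the term [j = 0], the second one
    raises [j] by one in every term of the previous identity.  Then, by
    induction on [k], [Delta^(N+1) o mu^(k+1) = (Delta^(N+1) o mu) o (mu^(k) (x) id)];
    expanding [Delta^(N+1) o mu] and applying the induction hypothesis to
    [Delta^(i+1) o mu^(k)] gives a double sum over [i] and over the [k]-tuples
    of sum [i], which is the sum over the [(k+1)]-tuples of sum [N] obtained by
    appending [j = N - i].  All Koszul signs vanish because every [Delta^(n)]
    has degree 0. *)

Local Arguments compDl {R d0 n m p} g g' f.
Local Arguments compDr {R d0 n m p} g f f'.
Local Arguments compZl {R d0 n m p} a g f.
Local Arguments compZr {R d0 n m p} a g f.
Local Arguments tensDl {R d0 n m n' m'} f f' g.
Local Arguments tensZl {R d0 n m n' m'} a f g.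
Local Arguments tensA {R d0 n1 m1 n2 m2 n3 m3} f g h.
Local Arguments tens_id0r {R d0 n m} f.
Local Arguments tens_id0l {R d0 n m} f.
Local Arguments tens_id {R} d0 n m.
Local Arguments homog_tens {R d0 n m n' m' d e f g} _ _.
Local Arguments homog_comp {R d0 n m p d e g f} _ _.
Local Arguments homog_id {R} d0 n.
Local Arguments comp_idl {R d0 n m} f.
Local Arguments comp_idr {R d0 n m} f.
Local Arguments Defs.compA {R d0 n m p q} h g f.
Local Arguments Defs.interchange {R d0 n m p n' m' p' d d'} g g' f f'.

Section Transport.
Variables (R : comPzRingType) (P : dgProp R).
Local Notation hcastP := (@hcast (fun x y => phom P x y : Type) _ _ _ _).

(* Forgetting the arities makes [pack f = pack g] a heterogeneous equality,
   usable when the arities of [f] and [g] are equal only propositionally. *)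
Definition pack n m (f : phom P n m) : {nm : nat * nat & phom P nm.1 nm.2} :=
  existT (fun nm : nat * nat => (phom P nm.1 nm.2 : Type)) (n, m) f.

Lemma pack_inj n m : injective (@pack n m).
Proof. by move=> f g; apply: inj_pair2_eq_dec; apply: eq_comparable. Qed.

Lemma pack_arity n m n' m' (f : phom P n m) (g : phom P n' m') :
  pack f = pack g -> n = n' /\ m = m'.
Proof. by move=> /(congr1 (@projT1 _ _)) [-> ->]. Qed.

Lemma pack_hcast n m n' m' (e1 : n = n') (e2 : m = m') (f : phom P n m) :
  pack (hcastP e1 e2 f) = pack f.
Proof. by case: n' / e1; case: m' / e2. Qed.

Lemma pack_compo n m p n' m' p' (g : phom P m p) (g' : phom P m' p')
    (f : phom P n m) (f' : phom P n' m') :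
  pack g = pack g' -> pack f = pack f' -> pack (pcompo g f) = pack (pcompo g' f').
Proof.
move=> eq_g eq_f; case: (pack_arity eq_g) => e1 e2; subst.
case: (pack_arity eq_f) => e1 _; subst.
by rewrite (pack_inj eq_g) (pack_inj eq_f).
Qed.

Lemma pack_tens n m n' m' a b a' b' (f : phom P n m) (g : phom P n' m')
    (f' : phom P a b) (g' : phom P a' b') :
  pack f = pack f' -> pack g = pack g' -> pack (ptens f g) = pack (ptens f' g').
Proof.
move=> eq_f eq_g; case: (pack_arity eq_f) => e1 e2; subst.
case: (pack_arity eq_g) => e1 e2; subst.
by rewrite (pack_inj eq_f) (pack_inj eq_g).
Qed.

Lemma pack_tensA n1 m1 n2 m2 n3 m3
    (f : phom P n1 m1) (g : phom P n2 m2) (h : phom P n3 m3) :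
  pack (ptens (ptens f g) h) = pack (ptens f (ptens g h)).
Proof. by rewrite tensA pack_hcast. Qed.

Lemma pack_tens_id0r n m (f : phom P n m) : pack (ptens f (pid P 0)) = pack f.
Proof. by rewrite tens_id0r pack_hcast. Qed.

(* [recast n m f] is [f] transported to the arities [(n, m)]; it is the junk
   value [0] when the arities of [f] are not [(n, m)]. *)
Definition recast n m n' m' (f : phom P n' m') : phom P n m :=
  match n' =P n, m' =P m with
  | ReflectT e1, ReflectT e2 => hcastP e1 e2 f
  | _, _ => 0
  end.

Lemma pack_recast n m n' m' (f : phom P n' m') :
  n' = n -> m' = m -> pack (recast n m f) = pack f.
Proof.
move=> e1 e2; rewrite /recast; case: eqP => [{}e1|/(_ e1)[]].
by case: eqP => [{}e2|/(_ e2)[]]; rewrite pack_hcast.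
Qed.

Lemma eq_recast n m n' m' (f : phom P n m) (g : phom P n' m') :
  pack f = pack g -> f = recast n m g.
Proof.
move=> eq_fg; case: (pack_arity eq_fg) => e1 e2; subst.
by apply: pack_inj; rewrite pack_recast.
Qed.

Lemma congr_recast n m n' m' a b (g : phom P n' m') (g' : phom P a b) :
  pack g = pack g' -> recast n m g = recast n m g'.
Proof.
move=> eq_g; case: (pack_arity eq_g) => e1 e2; subst.
by rewrite (pack_inj eq_g).
Qed.

Lemma recastD n m n' m' (f g : phom P n' m') :
  recast n m (f + g) = recast n m f + recast n m g.
Proof.
rewrite /recast; case: eqP => [e1|_]; last by rewrite addr0.
by case: eqP => [e2|_]; [case: n / e1; case: m / e2 | rewrite addr0].
Qed.

Lemma recast0 n m n' m' : recast n m (0 : phom P n' m') = 0.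
Proof.
rewrite /recast; case: eqP => [e1|//]; case: eqP => [e2|//].
by case: n / e1; case: m / e2.
Qed.

Lemma recast_sum n m n' m' (I : Type) (r : seq I) (Q : pred I)
    (F : I -> phom P n' m') :
  recast n m (\sum_(i <- r | Q i) F i) = \sum_(i <- r | Q i) recast n m (F i).
Proof. exact: (big_morph _ (@recastD n m n' m') (@recast0 n m n' m')). Qed.

Lemma pack_tcastT k m n (f : phom P k m) : m = n -> pack (tcastT n f) = pack f.
Proof.
by move=> e; rewrite /tcastT; case: eqP => [{}e|/(_ e)[]]; rewrite pack_hcast.
Qed.

Lemma tcastT_recast k m n (f : phom P k m) : tcastT n f = recast k n f.
Proof.
case: (m =P n) => e; first by apply: eq_recast; rewrite pack_tcastT.
by rewrite /tcastT /recast; case: eqP => // _; case: eqP.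
Qed.

Lemma homog_hcast d n m n' m' (e1 : n = n') (e2 : m = m') (f : phom P n m) :
  phomog d f -> phomog d (hcastP e1 e2 f).
Proof. by case: n' / e1; case: m' / e2. Qed.

End Transport.

Section Linearity.
Variables (R : comPzRingType) (P : dgProp R).

Lemma pcompo0l n m p (f : phom P n m) : pcompo (0 : phom P m p) f = 0.
Proof. by rewrite -(scale0r (0 : phom P m p)) compZl scale0r. Qed.

Lemma pcompo0r n m p (g : phom P m p) : pcompo g (0 : phom P n m) = 0.
Proof. by rewrite -(scale0r (0 : phom P n m)) compZr scale0r. Qed.

Lemma ptens0l n m n' m' (g : phom P n' m') : ptens (0 : phom P n m) g = 0.
Proof. by rewrite -(scale0r (0 : phom P n m)) tensZl scale0r. Qed.

Lemma pcompo_suml n m p (I : Type) (r : seq I) (Q : pred I)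
    (F : I -> phom P m p) (f : phom P n m) :
  pcompo (\sum_(i <- r | Q i) F i) f = \sum_(i <- r | Q i) pcompo (F i) f.
Proof. exact: (big_morph (pcompo^~ f) (fun g g' => compDl g g' f) (pcompo0l _ _)). Qed.

Lemma pcompo_sumr n m p (I : Type) (r : seq I) (Q : pred I)
    (F : I -> phom P n m) (g : phom P m p) :
  pcompo g (\sum_(i <- r | Q i) F i) = \sum_(i <- r | Q i) pcompo g (F i).
Proof. exact: (big_morph (pcompo g) (compDr g) (pcompo0r _ _)). Qed.

Lemma ptens_suml n m n' m' (I : Type) (r : seq I) (Q : pred I)
    (F : I -> phom P n m) (g : phom P n' m') :
  ptens (\sum_(i <- r | Q i) F i) g = \sum_(i <- r | Q i) ptens (F i) g.
Proof. exact: (big_morph (ptens^~ g) (fun f f' => tensDl f f' g) (ptens0l _ _ _)). Qed.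

Lemma interchange0_upper n m p n' m' p' d (g : phom P m p) (g' : phom P m' p')
    (f : phom P n m) (f' : phom P n' m') :
  phomog d f -> phomog 0 g' ->
  pcompo (ptens g g') (ptens f f') = ptens (pcompo g f) (pcompo g' f').
Proof. by move=> hf hg'; rewrite (Defs.interchange g g' f f' hf hg') /ksgn /= scale1r. Qed.

Lemma interchange0_lower n m p n' m' p' d (g : phom P m p) (g' : phom P m' p')
    (f : phom P n m) (f' : phom P n' m') :
  phomog 0 f -> phomog d g' ->
  pcompo (ptens g g') (ptens f f') = ptens (pcompo g f) (pcompo g' f').
Proof. by move=> hf hg'; rewrite (Defs.interchange g g' f f' hf hg') /ksgn /= andbF scale1r. Qed.

End Linearity.

Arguments interchange0_upper {R P n m p n' m' p' d g g' f f'}.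
Arguments interchange0_lower {R P n m p n' m' p' d g g' f f'}.

Lemma big_tuple_rcons (V : nmodType) (T : finType) K (F : K.+1.-tuple T -> V) :
  \sum_(a : K.+1.-tuple T) F a = \sum_(t : K.-tuple T) \sum_(x : T) F (rcons_tuple t x).
Proof.
rewrite pair_bigA /= (reindex (fun p : K.-tuple T * T => rcons_tuple p.1 p.2)) //.
apply: onW_bij; apply: inj_card_bij; last by rewrite card_prod !card_tuple expnSr.
by move=> [t x] [t' x'] /(congr1 val) /rcons_inj [/val_inj -> ->].
Qed.

Lemma big_ord_val_eq (V : nmodType) M N (ltNM : (N < M)%N) (F : 'I_M -> V) :
  \sum_(x : 'I_M | val x == N) F x = F (Ordinal ltNM).
Proof. by rewrite (big_pred1 (Ordinal ltNM)) // => x; rewrite /= -val_eqE. Qed.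

Lemma sum_split_last (V : nmodType) (I : finType) (s : I -> nat) M N
    (F : nat -> I -> nat -> V) : (N < M)%N ->
  \sum_(i < N.+1) \sum_(t | s t == i) F i t (N - i)%N
  = \sum_t \sum_(x : 'I_M | (s t + x == N)%N) F (s t) t x.
Proof.
move=> ltNM; under eq_bigr do rewrite big_mkcond.
rewrite exchange_big; apply: eq_bigr => t _.
have [le_sN | lt_Ns] := leqP (s t) N.
  have lt_xM : (N - s t < M)%N by apply: leq_ltn_trans (leq_subr _ _) ltNM.
  rewrite -big_mkcond (eq_bigl _ _ (fun i => eq_sym _ _)).
  rewrite (big_ord_val_eq (le_sN : (s t < N.+1)%N)).
  rewrite (eq_bigl (fun x : 'I_M => val x == (N - s t)%N)) ?(big_ord_val_eq lt_xM) // => x.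
  by rewrite -{1}(subnKC le_sN) eqn_add2l.
rewrite big1 => [|i _]; last by rewrite (gtn_eqF (leq_trans (ltn_ord i) lt_Ns)).
by rewrite big_pred0 // => x; rewrite gtn_eqF // (leq_trans lt_Ns (leq_addr _ _)).
Qed.

Lemma eq_outs (f g : nat -> nat) K :
  (forall i, (i <= K)%N -> f i = g i) -> outs f K = outs g K.
Proof.
elim: K => [|K IH] eq_fg /=; first exact: eq_fg.
by rewrite IH ?eq_fg // => i le_iK; apply/eq_fg/leqW.
Qed.

Lemma outs_nth (s : seq nat) K :
  (K < size s)%N -> outs (nth 0%N s) K = sumn (take K.+1 s).
Proof.
elim: K => [|K IH] lt_Ks /=; first by rewrite (take_nth 0%N lt_Ks) take0 /= addn0.
by rewrite IH ?(ltnW lt_Ks) // (take_nth 0%N lt_Ks) sumn_rcons.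
Qed.

Section Brackets.
Variables (R : comPzRingType) (P : dgProp R) (Del : phom P 1 2) (mu : phom P 2 1).
Hypotheses (hDel : phomog 0 Del) (hmu : phomog 1 mu).
Hypothesis leibniz : pcompo Del mu =
  pcompo (ptens (pid P 1) mu) (ptens Del (pid P 1))
  + pcompo (ptens mu (pid P 1)) (ptens (pid P 1) Del).

Local Notation hcastP := (@hcast (fun x y => phom P x y : Type) _ _ _ _).
Local Notation D := (DeltaS Del).
Local Notation J := (Jn mu).

Lemma DeltaS_succ s :
  D s.+1 = hcastP (erefl 1%N) (addn1_eq s.+1) (pcompo (ptens (D s) (pid P 1)) Del).
Proof. by []. Qed.

Lemma muS_succ k :
  muS mu k.+1 = hcastP (addn1_eq k.+1) (erefl 1%N) (pcompo mu (ptens (muS mu k) (pid P 1))).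
Proof. by []. Qed.

Lemma homog_DeltaS s : phomog 0 (D s).
Proof.
elim: s => [|s IH]; first exact: homog_id.
rewrite DeltaS_succ; apply: homog_hcast.
by have := homog_comp (homog_tens IH (homog_id P 1)) hDel; rewrite !addr0.
Qed.

Lemma homog_tens_DeltaS a b : phomog 0 (ptens (D a) (D b)).
Proof. by have := homog_tens (homog_DeltaS a) (homog_DeltaS b); rewrite addr0. Qed.

Lemma homog_muS k : exists d, phomog d (muS mu k).
Proof.
elim: k => [|k [d IH]]; first by exists 0; apply: homog_id.
eexists; rewrite muS_succ; apply: homog_hcast.
exact: homog_comp hmu (homog_tens IH (homog_id P 1)).
Qed.

Lemma pack_Jn_id0 M : pack (J M 0) = pack (ptens (pid P M) mu).
Proof. by rewrite /Jn pack_hcast pack_tens_id0r. Qed.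

Lemma pack_Jn_tens_id M a : pack (ptens (J M a) (pid P 1)) = pack (J M a.+1).
Proof.
rewrite /Jn pack_hcast.
rewrite (pack_tens (f' := ptens (ptens (pid P M) mu) (pid P a)) (g' := pid P 1))
  ?pack_hcast // pack_tensA tens_id.
by apply: pack_tens => //; rewrite addn1.
Qed.

Lemma pack_DeltaS_succ_tens_id N :
  pack (ptens (D N.+1) (pid P 1))
  = pack (pcompo (ptens (D N) (pid P 2)) (ptens Del (pid P 1))).
Proof.
transitivity (pack (ptens (pcompo (ptens (D N) (pid P 1)) Del) (pid P 1))).
  by apply: pack_tens => //; rewrite pack_hcast.
rewrite -{2}[pid P 1](comp_idl (pid P 1)) -(interchange0_upper hDel (homog_id P 1)).
by apply: pack_compo => //; rewrite (pack_tensA (D N)) tens_id.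
Qed.

Lemma pack_tens_DeltaS_succ i j :
  pack (pcompo (ptens (ptens (D i) (D j)) (pid P 1)) (ptens (pid P 1) Del))
  = pack (ptens (D i) (D j.+1)).
Proof.
transitivity (pack (pcompo (ptens (D i) (ptens (D j) (pid P 1))) (ptens (pid P 1) Del))).
  by apply: pack_compo => //; rewrite pack_tensA.
have hDj : phomog 0 (ptens (D j) (pid P 1)).
  by have := homog_tens (homog_DeltaS j) (homog_id P 1); rewrite addr0.
rewrite (interchange0_lower (homog_id P 1) hDj) comp_idr.
by apply: pack_tens => //; rewrite DeltaS_succ pack_hcast.
Qed.

Lemma pack_leibniz_first N :
  pack (pcompo (ptens (D N) (pid P 1))
          (pcompo (ptens (pid P 1) mu) (ptens Del (pid P 1))))
  = pack (pcompo (J N.+1 0) (ptens (D N.+1) (D 0))).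
Proof.
rewrite -Defs.compA (interchange0_lower (homog_id P 1) (homog_id P 1)) comp_idr comp_idl.
symmetry; transitivity (pack (pcompo (ptens (pid P N.+1) mu)
                          (pcompo (ptens (D N) (pid P 2)) (ptens Del (pid P 1))))).
  by apply: pack_compo; [exact: pack_Jn_id0 | exact: pack_DeltaS_succ_tens_id].
by rewrite -Defs.compA (interchange0_lower (homog_DeltaS N) hmu) comp_idl comp_idr.
Qed.

Lemma pack_leibniz_second i j :
  pack (pcompo (ptens (pcompo (J i j) (ptens (D i) (D j))) (pid P 1)) (ptens (pid P 1) Del))
  = pack (pcompo (J i j.+1) (ptens (D i) (D j.+1))).
Proof.
have -> : ptens (pcompo (J i j) (ptens (D i) (D j))) (pid P 1)
        = pcompo (ptens (J i j) (pid P 1)) (ptens (ptens (D i) (D j)) (pid P 1)).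
  by rewrite (interchange0_upper (homog_tens_DeltaS i j) (homog_id P 1)) comp_idl.
rewrite Defs.compA.
by apply: pack_compo; [exact: pack_Jn_tens_id | exact: pack_tens_DeltaS_succ].
Qed.

Definition bracket2 N i :=
  recast 2 N.+1 (pcompo (J i (N - i)) (ptens (D i) (D (N - i)))).

Lemma DeltaS_mu N : pcompo (D N) mu = \sum_(i < N.+1) bracket2 N i.
Proof.
elim: N => [|N IH].
  rewrite big_ord1 /bracket2; apply: eq_recast => /=.
  by rewrite comp_idl tens_id comp_idr pack_Jn_id0 tens_id0l.
set X1 := pcompo (ptens (D N) (pid P 1))
            (pcompo (ptens (pid P 1) mu) (ptens Del (pid P 1))).
set X2 := pcompo (ptens (D N) (pid P 1))
            (pcompo (ptens mu (pid P 1)) (ptens (pid P 1) Del)).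
have -> : pcompo (D N.+1) mu = recast 2 N.+2 (X1 + X2).
  apply: eq_recast; rewrite -compDr -leibniz -Defs.compA.
  by apply: pack_compo => //; rewrite pack_hcast.
rewrite recastD big_ord_recr addrC /=; congr (_ + _); last first.
  by apply: congr_recast; rewrite subnn pack_leibniz_first.
have -> : X2 = pcompo (ptens (pcompo (D N) mu) (pid P 1)) (ptens (pid P 1) Del).
  by rewrite /X2 -Defs.compA (interchange0_upper hmu (homog_id P 1)) comp_idl.
rewrite IH ptens_suml pcompo_suml recast_sum; apply: eq_bigr => i _.
have le_iN : (i <= N)%N by rewrite -ltnS.
rewrite /bracket2 (subSn le_iN); apply: congr_recast.
rewrite -pack_leibniz_second; apply: pack_compo => //.
by apply: pack_tens => //; rewrite pack_recast // subnKC.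
Qed.

Lemma bracket2_muS N i K : (i <= N)%N ->
  recast K.+2 N.+1 (pcompo (bracket2 N i) (ptens (muS mu K) (pid P 1)))
  = recast K.+2 N.+1 (pcompo (J i (N - i)) (ptens (pcompo (D i) (muS mu K)) (D (N - i)))).
Proof.
move=> le_iN; apply: congr_recast; have [d hd] := homog_muS K.
transitivity (pack (pcompo (pcompo (J i (N - i)) (ptens (D i) (D (N - i))))
                          (ptens (muS mu K) (pid P 1)))).
  by apply: pack_compo => //; rewrite pack_recast // subnKC.
by rewrite Defs.compA (interchange0_upper hd (homog_DeltaS (N - i))) comp_idr.
Qed.

Lemma brk_succ f K :
  brk Del mu f K.+1 = hcastP (addn1_eq K.+1) (erefl _)
    (pcompo (J (outs f K) (f K.+1)) (ptens (brk Del mu f K) (D (f K.+1)))).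
Proof. by []. Qed.

Lemma pack_brk_ext (f g : nat -> nat) K : (forall i, (i <= K)%N -> f i = g i) ->
  pack (brk Del mu f K) = pack (brk Del mu g K).
Proof.
elim: K => [|K IH] eq_fg; first by rewrite /= eq_fg.
have eq_fgK i : (i <= K)%N -> f i = g i by move=> le_iK; apply/eq_fg/leqW.
rewrite !brk_succ !pack_hcast; apply: pack_compo.
  by rewrite (eq_outs eq_fgK) eq_fg.
by apply: pack_tens; [exact: IH | rewrite eq_fg].
Qed.

Lemma pack_brk_rcons (l : seq nat) K x : size l = K.+1 ->
  pack (brk Del mu (nth 0%N (rcons l x)) K.+1)
  = pack (pcompo (J (sumn l) x)
                 (ptens (tcastT (sumn l).+1 (brk Del mu (nth 0%N l) K)) (D x))).
Proof.
move=> size_l; rewrite brk_succ pack_hcast.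
have outs_l : outs (nth 0%N (rcons l x)) K = sumn l.
  by rewrite outs_nth ?size_rcons ?size_l // -cats1 -size_l take_size_cat.
have last_l : nth 0%N (rcons l x) K.+1 = x by rewrite nth_rcons size_l ltnn eqxx.
apply: pack_compo; first by rewrite outs_l last_l.
apply: pack_tens; last by rewrite last_l.
rewrite pack_tcastT; last by rewrite outs_nth ?size_l // take_oversize ?size_l.
by apply: pack_brk_ext => j le_jK; rewrite nth_rcons size_l ltnS le_jK.
Qed.

Local Notation tsum t := (sumn [seq nat_of_ord x | x <- t]).

(* The entries range over a fixed ['I_M] with [N < M], so that the induction
   hypothesis applies to every [i <= N] at the same index type. *)
Lemma DeltaS_muS K N M : (N < M)%N ->
  pcompo (D N) (muS mu K) =
  \sum_(a : K.+1.-tuple 'I_M | (1 + tsum a == N.+1)%N)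
     tcastT N.+1 (brk Del mu (nth 0%N [seq nat_of_ord x | x <- a]) K).
Proof.
elim: K N => [|K IH] N ltNM.
  rewrite [muS mu 0]/= comp_idr big_mkcond big_tuple_rcons (big_pred1 [tuple]); last first.
    by move=> t; apply/esym/eqP; exact: tuple0.
  rewrite -big_mkcond (eq_bigl (fun x : 'I_M => val x == N)) ?(big_ord_val_eq ltNM).
    by rewrite tcastT_recast; apply: eq_recast.
  by move=> x /=; rewrite addn0.
pose F i (t : K.+1.-tuple 'I_M) x := recast K.+2 N.+1
  (pcompo (J i x) (ptens (tcastT i.+1 (brk Del mu (nth 0%N [seq nat_of_ord y | y <- t]) K)) (D x))).
have expand (i : 'I_N.+1) :
    recast K.+2 N.+1 (pcompo (bracket2 N i) (ptens (muS mu K) (pid P 1)))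
    = \sum_(t : K.+1.-tuple 'I_M | tsum t == i) F i t (N - i)%N.
  have le_iN : (i <= N)%N by rewrite -ltnS.
  rewrite bracket2_muS // (IH i (leq_ltn_trans le_iN ltNM)).
  by rewrite ptens_suml pcompo_sumr recast_sum.
have -> : pcompo (D N) (muS mu K.+1)
        = recast K.+2 N.+1 (pcompo (pcompo (D N) mu) (ptens (muS mu K) (pid P 1))).
  apply: eq_recast; rewrite muS_succ Defs.compA.
  by apply: pack_compo => //; rewrite pack_hcast.
rewrite DeltaS_mu pcompo_suml recast_sum (eq_bigr _ (fun i _ => expand i)).
rewrite (sum_split_last (fun t : K.+1.-tuple _ => tsum t) _ ltNM).
rewrite [RHS]big_mkcond [RHS]big_tuple_rcons.
apply: eq_bigr => t _; rewrite -big_mkcond.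
have map_rcons_t x : [seq nat_of_ord y | y <- rcons_tuple t x]
                   = rcons [seq nat_of_ord y | y <- t] x by rewrite map_rcons.
apply: eq_big => [x | x _]; first by rewrite map_rcons_t sumn_rcons.
rewrite tcastT_recast; apply: congr_recast.
by rewrite map_rcons_t pack_brk_rcons // size_map size_tuple.
Qed.

End Brackets.

Theorem lemmaA8 (R : comPzRingType) (P : dgProp R)
  (eps : phom P 1 0) (Del : phom P 1 2) (mu : phom P 2 1)
  (* degrees of the generators *)
  (heps : phomog 0 eps) (hDel : phomog 0 Del) (hmu : phomog 1 mu)
  (* differential on the generators *)
  (deps : pdif eps = 0) (dDel : pdif Del = 0)
  (dmu : pdif mu = ptens eps (pid P 1) - ptens (pid P 1) eps)
  (* relations of S *)
  (r_eps_mu : pcompo eps mu = 0)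
  (r_counit_l : pcompo (ptens eps (pid P 1)) Del = pid P 1)
  (r_counit_r : pcompo (ptens (pid P 1) eps) Del = pid P 1)
  (* additional relations of MS *)
  (r_comm : mu = pcompo mu (psym P 1 1))
  (r_assoc : pcompo mu (ptens mu (pid P 1)) = pcompo mu (ptens (pid P 1) mu))
  (r_coassoc : pcompo (ptens Del (pid P 1)) Del = pcompo (ptens (pid P 1) Del) Del)
  (r_leibniz : pcompo Del mu =
      pcompo (ptens (pid P 1) mu) (ptens Del (pid P 1))
      + pcompo (ptens mu (pid P 1)) (ptens (pid P 1) Del))
  (r_mu_Del : pcompo mu Del = 0)
  (k n : nat) (hk : (1 <= k)%N) (hn : (1 <= n)%N) :
  pcompo (DeltaI Del n) (muI mu k) =
  \sum_(a : k.-tuple 'I_n | (1 + sumn [seq nat_of_ord x | x <- a] == n)%N)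
     bracket Del mu a.
Proof.
case: k hk => // K _; case: n hn => // N _.
exact: DeltaS_muS hDel hmu r_leibniz K N N.+1 (ltnSn N).
Qed.
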